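(* Let $t_f>0$. Let $b$ be a box in an octree and let $c\in b$ be a QBX center with expansion radius $r_c>0$ that is suspended in $b$. Then the closed cube $\{x\in\mathbb R^3:|x-c|_\infty\le 4\sqrt3\,r_c/t_f\}$ contains the $2$-near neighborhood of $b$.
   Context: An octree is a rooted tree of axis-aligned closed cubes (''boxes'') in $\mathbb R^3$. For a box $b$, $|b|$ denotes its $\ell^\infty$ radius (half side length) and $c_b$ its center. The $k$-near neighborhood of $b$ is the closed cube $\{x:|x-c_b|_\infty\le|b|(1+2k)\}$. For target confinement factor $t_f$, $\mathsf{TCR}(b)$ is the closed Euclidean ball of radius $\sqrt3|b|(1+t_f)$ centered at $c_b$. A center $c\in b$ with radius $r_c$ is suspended in $b$ if for every one of the eight cubes $b'$ of radius $|b|/2$ obtained by bisecting $b$ along each axis that contains $c$, the closed Euclidean ball $\{x:|x-c|_2\le r_c\}$ is not contained in $\mathsf{TCR}(b')$. *)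

From Stdlib Require Import Reals Lra.
Open Scope R_scope.

Record pt3 := Pt3 { px : R; py : R; pz : R }.

Definition sub3 (x y : pt3) : pt3 := Pt3 (px x - px y) (py x - py y) (pz x - pz y).

Definition norm_inf (v : pt3) : R := Rmax (Rabs (px v)) (Rmax (Rabs (py v)) (Rabs (pz v))).
Definition norm_2 (v : pt3) : R := sqrt (px v ^ 2 + py v ^ 2 + pz v ^ 2).

(* An axis-aligned closed cube ("box"), given by its center c_b and l-inf radius |b| > 0. *)
Record box := Box { bcenter : pt3; brad : R }.

Definition in_box (b : box) (x : pt3) : Prop := norm_inf (sub3 x (bcenter b)) <= brad b.

Definition near_nbhd (k : R) (b : box) (x : pt3) : Prop :=
  norm_inf (sub3 x (bcenter b)) <= brad b * (1 + 2 * k).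

Definition TCR (tf : R) (b : box) (x : pt3) : Prop :=
  norm_2 (sub3 x (bcenter b)) <= sqrt 3 * brad b * (1 + tf).

Definition sgn (s : bool) : R := if s then 1 else -1.
Definition child (b : box) (s1 s2 s3 : bool) : box :=
  Box (Pt3 (px (bcenter b) + sgn s1 * (brad b / 2))
           (py (bcenter b) + sgn s2 * (brad b / 2))
           (pz (bcenter b) + sgn s3 * (brad b / 2)))
      (brad b / 2).

Definition ball2 (c : pt3) (r : R) (x : pt3) : Prop := norm_2 (sub3 x c) <= r.

Definition suspended (tf : R) (b : box) (c : pt3) (rc : R) : Prop :=
  in_box b c /\
  forall s1 s2 s3 : bool,
    in_box (child b s1 s2 s3) c ->
    ~ (forall x, ball2 c rc x -> TCR tf (child b s1 s2 s3) x).

(* The child b' of b containing c has |c - c_b'|_2 <= sqrt3 |b|/2, so by the triangle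
   inequality TCR(b') contains the ball of radius r_c about c as soon as
   r_c <= sqrt3 (|b|/2) t_f.  Suspension forbids this, hence |b| < 2 r_c / (sqrt3 t_f).
   A point of the 2-near neighborhood lies within 5|b| of c_b and c within |b|, so
   |x - c|_inf <= 6|b| < 12 r_c / (sqrt3 t_f) = 4 sqrt3 r_c / t_f. *)

From Stdlib Require Import Reals Lra.
Open Scope R_scope.

Lemma Rabs_le_between (x m : R) : Rabs x <= m -> - m <= x <= m.
Proof. unfold Rabs; destruct (Rcase_abs x); lra. Qed.

Lemma norm_inf_le_iff (v : pt3) (m : R) :
  norm_inf v <= m <-> Rabs (px v) <= m /\ Rabs (py v) <= m /\ Rabs (pz v) <= m.
Proof.
  unfold norm_inf; split.
  - intros H.
    pose proof (Rmax_l (Rabs (px v)) (Rmax (Rabs (py v)) (Rabs (pz v)))).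
    pose proof (Rmax_r (Rabs (px v)) (Rmax (Rabs (py v)) (Rabs (pz v)))).
    pose proof (Rmax_l (Rabs (py v)) (Rabs (pz v))).
    pose proof (Rmax_r (Rabs (py v)) (Rabs (pz v))).
    lra.
  - intros (Hx & Hy & Hz). repeat apply Rmax_lub; assumption.
Qed.

Lemma norm_inf_sub_sym (x y : pt3) : norm_inf (sub3 x y) = norm_inf (sub3 y x).
Proof.
  unfold norm_inf, sub3; simpl.
  rewrite (Rabs_minus_sym (px x)), (Rabs_minus_sym (py x)), (Rabs_minus_sym (pz x)).
  reflexivity.
Qed.

Lemma norm_inf_sub_triangle (x y z : pt3) :
  norm_inf (sub3 x z) <= norm_inf (sub3 x y) + norm_inf (sub3 y z).
Proof.
  assert (Rabs_sub_triangle : forall p q r : R,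
            Rabs (p - r) <= Rabs (p - q) + Rabs (q - r)).
  { intros p q r. replace (p - r) with ((p - q) + (q - r)) by ring. apply Rabs_triang. }
  destruct (proj1 (norm_inf_le_iff (sub3 x y) _) (Rle_refl _)) as (X1 & Y1 & Z1).
  destruct (proj1 (norm_inf_le_iff (sub3 y z) _) (Rle_refl _)) as (X2 & Y2 & Z2).
  simpl in *.
  apply norm_inf_le_iff; simpl; repeat split.
  - pose proof (Rabs_sub_triangle (px x) (px y) (px z)); lra.
  - pose proof (Rabs_sub_triangle (py x) (py y) (py z)); lra.
  - pose proof (Rabs_sub_triangle (pz x) (pz y) (pz z)); lra.
Qed.

Lemma norm_2_le_norm_inf (v : pt3) : norm_2 v <= sqrt 3 * norm_inf v.
Proof.
  destruct (proj1 (norm_inf_le_iff v _) (Rle_refl _)) as (Hx & Hy & Hz).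
  set (m := norm_inf v) in *.
  assert (Hm : 0 <= m) by (pose proof (Rabs_pos (px v)); lra).
  apply (pow_maj_Rabs _ _ 2) in Hx; apply (pow_maj_Rabs _ _ 2) in Hy;
    apply (pow_maj_Rabs _ _ 2) in Hz.
  unfold norm_2. rewrite <- (sqrt_pow2 m Hm), <- sqrt_mult_alt by lra.
  apply sqrt_le_1_alt. nra.
Qed.

Lemma cauchy_schwarz3 (a b c d e f : R) :
  a * d + b * e + c * f <= sqrt (a ^ 2 + b ^ 2 + c ^ 2) * sqrt (d ^ 2 + e ^ 2 + f ^ 2).
Proof.
  set (t := a * d + b * e + c * f).
  assert (Lagrange : t ^ 2 <= (a ^ 2 + b ^ 2 + c ^ 2) * (d ^ 2 + e ^ 2 + f ^ 2)).
  { assert (E : (a ^ 2 + b ^ 2 + c ^ 2) * (d ^ 2 + e ^ 2 + f ^ 2) - t ^ 2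
                = (a * e - b * d) ^ 2 + (a * f - c * d) ^ 2 + (b * f - c * e) ^ 2)
      by (unfold t; ring).
    pose proof (pow2_ge_0 (a * e - b * d)).
    pose proof (pow2_ge_0 (a * f - c * d)).
    pose proof (pow2_ge_0 (b * f - c * e)).
    lra. }
  rewrite <- sqrt_mult_alt by nra.
  apply Rle_trans with (Rabs t); [apply Rle_abs|].
  rewrite <- (sqrt_pow2 (Rabs t)) by apply Rabs_pos.
  rewrite pow2_abs.
  apply sqrt_le_1_alt; exact Lagrange.
Qed.

Lemma sqrt_sum_sq_triangle (a b c d e f : R) :
  sqrt ((a + d) ^ 2 + (b + e) ^ 2 + (c + f) ^ 2)
    <= sqrt (a ^ 2 + b ^ 2 + c ^ 2) + sqrt (d ^ 2 + e ^ 2 + f ^ 2).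
Proof.
  set (P := a ^ 2 + b ^ 2 + c ^ 2). set (Q := d ^ 2 + e ^ 2 + f ^ 2).
  assert (HP : 0 <= P) by (unfold P; nra).
  assert (HQ : 0 <= Q) by (unfold Q; nra).
  pose proof (sqrt_sqrt P HP). pose proof (sqrt_sqrt Q HQ).
  pose proof (sqrt_pos P). pose proof (sqrt_pos Q).
  pose proof (cauchy_schwarz3 a b c d e f) as CS. fold P Q in CS.
  rewrite <- (sqrt_pow2 (sqrt P + sqrt Q)) by lra.
  apply sqrt_le_1_alt. unfold P, Q in *. nra.
Qed.

Lemma norm_2_sub_triangle (x y z : pt3) :
  norm_2 (sub3 x z) <= norm_2 (sub3 x y) + norm_2 (sub3 y z).
Proof.
  unfold norm_2, sub3; simpl.
  replace (px x - px z) with ((px x - px y) + (px y - px z)) by ring.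
  replace (py x - py z) with ((py x - py y) + (py y - py z)) by ring.
  replace (pz x - pz z) with ((pz x - pz y) + (pz y - pz z)) by ring.
  apply sqrt_sum_sq_triangle.
Qed.

Lemma in_some_child (b : box) (c : pt3) :
  in_box b c -> exists s1 s2 s3, in_box (child b s1 s2 s3) c.
Proof.
  assert (half : forall c0 x0 h : R, Rabs (c0 - x0) <= h ->
            exists s, Rabs (c0 - (x0 + sgn s * (h / 2))) <= h / 2).
  { intros c0 x0 h H. apply Rabs_le_between in H.
    destruct (Rle_dec x0 c0); [exists true | exists false];
      simpl; apply Rabs_le; lra. }
  unfold in_box; intros Hc.
  destruct (proj1 (norm_inf_le_iff _ _) Hc) as (Hx & Hy & Hz); simpl in *.
  destruct (half _ _ _ Hx) as [s1 H1].
  destruct (half _ _ _ Hy) as [s2 H2].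
  destruct (half _ _ _ Hz) as [s3 H3].
  exists s1, s2, s3. apply norm_inf_le_iff; simpl; auto.
Qed.

Lemma ball2_sub_TCR (tf : R) (b : box) (c : pt3) (rc : R) :
  in_box b c -> rc <= sqrt 3 * brad b * tf ->
  forall x, ball2 c rc x -> TCR tf b x.
Proof.
  unfold in_box, ball2, TCR; intros Hc Hrc x Hx.
  pose proof (norm_2_le_norm_inf (sub3 c (bcenter b))) as Hcb.
  pose proof (norm_2_sub_triangle x c (bcenter b)).
  pose proof (sqrt_pos 3).
  nra.
Qed.

Lemma suspended_radius_gt (tf : R) (b : box) (c : pt3) (rc : R) :
  suspended tf b c rc -> sqrt 3 * (brad b / 2) * tf < rc.
Proof.
  intros [Hc Hs].
  destruct (in_some_child b c Hc) as (s1 & s2 & s3 & Hchild).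
  destruct (Rlt_le_dec (sqrt 3 * (brad b / 2) * tf) rc) as [Hlt | Hle]; [exact Hlt|].
  exfalso. apply (Hs s1 s2 s3 Hchild).
  exact (ball2_sub_TCR tf (child b s1 s2 s3) c rc Hchild Hle).
Qed.

Lemma near_nbhd_dist_le (k : R) (b : box) (c x : pt3) :
  in_box b c -> near_nbhd k b x -> norm_inf (sub3 x c) <= brad b * (2 + 2 * k).
Proof.
  unfold in_box, near_nbhd; intros Hc Hx.
  rewrite norm_inf_sub_sym in Hc.
  pose proof (norm_inf_sub_triangle x (bcenter b) c).
  lra.
Qed.

Theorem mainTheorem4 (tf : R) (b : box) (c : pt3) (rc : R) :
  0 < tf -> 0 < brad b -> 0 < rc ->
  in_box b c ->
  suspended tf b c rc ->
  forall x : pt3, near_nbhd 2 b x ->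
    norm_inf (sub3 x c) <= 4 * sqrt 3 * rc / tf.
Proof.
  intros Htf _ _ Hc Hsusp x Hx.
  pose proof (near_nbhd_dist_le 2 b c x Hc Hx) as Hdist.
  pose proof (suspended_radius_gt tf b c rc Hsusp) as Hrc.
  pose proof (sqrt_sqrt 3 ltac:(lra)) as Hsqrt3.
  pose proof (sqrt_lt_R0 3 ltac:(lra)) as Hsqrt3_pos.
  assert (Hsix : 6 * brad b <= 4 * sqrt 3 * rc / tf).
  { apply (Rmult_le_reg_r tf); [lra|].
    replace (4 * sqrt 3 * rc / tf * tf) with (4 * sqrt 3 * rc) by (field; lra).
    assert (Hscaled : 4 * sqrt 3 * (sqrt 3 * (brad b / 2) * tf) < 4 * sqrt 3 * rc)
      by (apply Rmult_lt_compat_l; lra).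
    replace (4 * sqrt 3 * (sqrt 3 * (brad b / 2) * tf))
      with (2 * (sqrt 3 * sqrt 3) * brad b * tf) in Hscaled by field.
    rewrite Hsqrt3 in Hscaled. lra. }
  lra.
Qed.
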